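(* Let $f:\mathbb{R}^n\times\mathbb{R}_{\ge 0}\to\mathbb{R}^n$ be smooth and let $\gamma_1,\dots,\gamma_s$ be linear operators such that $f$ is $\gamma_i$-equivariant for each $i$; set $\mathcal{M}_i=\{x:\gamma_i x=x\}$ and $\mathcal{M}_\cap=\bigcap_{i=1}^s\mathcal{M}_i$, and assume $\mathcal{M}_\cap\neq\{0\}$. If either (i) $\dot x=f(x,t)$ is contracting towards each subspace $\mathcal{M}_i$, $i=1,\dots,s$, or (ii) $\dot x=f(x,t)$ is contracting, then every solution of $\dot x=f(x,t)$ converges to $\mathcal{M}_\cap$ as $t\to+\infty$, i.e. all solutions asymptotically exhibit the symmetry defined by $\mathcal{M}_\cap$.
   Context: $f$ is $\gamma$-equivariant if $f(\gamma x,t)=\gamma f(x,t)$ for all $x,t$; then $\mathcal{M}_\gamma=\{x:\gamma x=x\}$ is flow-invariant. Given a vector norm with induced matrix norm $\|\cdot\|$, the matrix measure is $\mu(A)=\lim_{h\searrow0}\frac1h(\|I+hA\|-1)$. The system $\dot x=f(x,t)$ is contracting if there exist a matrix measure $\mu$ (possibly induced by a weighted norm $|\Theta x|_i$, $i\in\{1,2,\infty\}$, $\Theta$ constant invertible) and $\lambda>0$ with $\mu(\partial f/\partial x(x,t))\le-\lambda$ for all $x$ and $t\ge0$; then any two trajectories converge exponentially to each other. The system is contracting towards a flow-invariant linear subspace $\mathcal{M}$ if all its trajectories converge exponentially towards $\mathcal{M}$. *)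

From Stdlib Require Import Reals.
From mathcomp Require Import all_boot.
Set Implicit Arguments.
Unset Strict Implicit.
Unset Printing Implicit Defensive.
Open Scope R_scope.

Definition vec (n : nat) := 'I_n -> R.
Definition mat (n : nat) := 'I_n -> 'I_n -> R.

Definition upd (I : eqType) (p : I -> R) (i : I) (h : R) : I -> R :=
  fun j => if j == i then h else p j.

Definition cont_fun (I : Type) (g : (I -> R) -> R) : Prop :=
  forall (p : I -> R) eps, 0 < eps -> exists delta, 0 < delta /\
    forall q : I -> R, (forall i, Rabs (q i - p i) < delta) -> Rabs (g q - g p) < eps.

Fixpoint Ck (I : eqType) (k : nat) (g : (I -> R) -> R) : Prop :=
  match k with
  | O => cont_fun g
  | S k' => cont_fun g /\ exists dg : I -> (I -> R) -> R,
      (forall i p, derivable_pt_lim (fun h => g (upd p i h)) (p i) (dg i p)) /\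
      forall i, Ck k' (dg i)
  end.

Definition smooth_fun (I : eqType) (g : (I -> R) -> R) : Prop := forall k, Ck k g.

(* f : R^n x R -> R^n is smooth jointly in (x,t); the variable t is index None *)
Definition smooth_field (n : nat) (f : vec n -> R -> vec n) : Prop :=
  forall i : 'I_n,
    smooth_fun (fun p : option 'I_n -> R => f (fun j => p (Some j)) (p None) i).

Definition is_linear (n : nat) (g : vec n -> vec n) : Prop :=
  (forall x y : vec n, g (fun i => x i + y i) = (fun i => g x i + g y i)) /\
  (forall (c : R) (x : vec n), g (fun i => c * x i) = (fun i => c * g x i)).

Definition equivariant (n : nat) (f : vec n -> R -> vec n) (g : vec n -> vec n) : Prop :=
  forall x t, 0 <= t -> f (g x) t = g (f x t).

Definition fix_space (n : nat) (g : vec n -> vec n) : vec n -> Prop := fun x => g x = x.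

Definition Mcap (n s : nat) (gam : 'I_s -> vec n -> vec n) : vec n -> Prop :=
  fun x => forall i, gam i x = x.

Definition is_solution (n : nat) (f : vec n -> R -> vec n) (x : R -> vec n) (t0 : R) : Prop :=
  0 <= t0 /\ forall t, t0 < t -> forall i,
    derivable_pt_lim (fun s => x s i) t (f (x t) t i).

Definition converges_to (n : nat) (x : R -> vec n) (M : vec n -> Prop) : Prop :=
  forall eps, 0 < eps -> exists T, forall t, T <= t ->
    exists y, M y /\ forall i, Rabs (x t i - y i) < eps.

Definition converges_exp (n : nat) (x : R -> vec n) (t0 : R) (M : vec n -> Prop) : Prop :=
  exists C lam, 0 < lam /\ forall t, t0 < t ->
    exists y, M y /\ forall i, Rabs (x t i - y i) <= C * exp (- lam * t).

Definition contracting_towards (n : nat) (f : vec n -> R -> vec n) (M : vec n -> Prop) : Prop :=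
  forall x t0, is_solution f x t0 -> converges_exp x t0 M.

Definition is_norm (n : nat) (N : vec n -> R) : Prop :=
  (forall x, 0 <= N x) /\
  (forall x, N x = 0 -> forall i, x i = 0) /\
  (forall c x, N (fun i => c * x i) = Rabs c * N x) /\
  (forall x y, N (fun i => x i + y i) <= N x + N y).

Definition mxv (n : nat) (A : mat n) (x : vec n) : vec n :=
  fun i => \big[Rplus/0]_(j < n) (A i j * x j).

Definition is_opnorm (n : nat) (N : vec n -> R) (A : mat n) (c : R) : Prop :=
  is_lub (fun r => exists x, N x = 1 /\ r = N (mxv A x)) c.

Definition id_plus (n : nat) (h : R) (A : mat n) : mat n :=
  fun i j => (if i == j then 1 else 0) + h * A i j.

Definition is_matrix_measure (n : nat) (N : vec n -> R) (A : mat n) (m : R) : Prop :=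
  forall eps, 0 < eps -> exists delta, 0 < delta /\
    forall h c, 0 < h < delta -> is_opnorm N (id_plus h A) c ->
      Rabs ((c - 1) / h - m) < eps.

Definition is_jacobian (n : nat) (f : vec n -> R -> vec n) (x : vec n) (t : R) (A : mat n) : Prop :=
  forall i j, derivable_pt_lim (fun h => f (upd x j h) t i) (x j) (A i j).

Definition contracting (n : nat) (f : vec n -> R -> vec n) : Prop :=
  exists (N : vec n -> R) (lam : R), is_norm N /\ 0 < lam /\
    forall x t A, 0 <= t -> is_jacobian f x t A ->
      exists m, is_matrix_measure N A m /\ m <= - lam.

(** Both alternatives reduce to the vanishing of the defects [gam i (x t) - x t]: [Mcap gam]
    is the kernel of the linear map [z |-> (gam i z - z)_i], and a point whose image under a
    linear map is small lies close to its kernel.  Under (i) the defect of [gam i] is bounded by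
    a multiple of the distance from [x t] to [M_i], which decays exponentially.  Under (ii)
    equivariance makes [gam i x] a solution too; the matrix-measure bound on the Jacobian makes
    an Euler step [z |-> z + h f(z,t)] shrink [N]-distances by [1 - lam h + o(h)], so that
    [D t = N (x t - gam i (x t))] satisfies [D (t + h) <= (1 - lam h) D t + o(h)] and hence
    decays like [exp (- lam t)]. *)

From Stdlib Require Import Reals Lra ClassicalEpsilon Classical FunctionalExtensionality.
From mathcomp Require Import all_boot all_algebra Rstruct.
Set Implicit Arguments. Unset Strict Implicit. Unset Printing Implicit Defensive.
Open Scope R_scope.

(** * Finite sums and finitely many limits *)

Section FiniteSums.
Variable I : finType.
Implicit Types F G : I -> R.

Lemma sum_le F G : (forall j, F j <= G j) ->
  \big[Rplus/0]_(j : I) F j <= \big[Rplus/0]_(j : I) G j.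
Proof. by move=> FG; elim/big_ind2: _ => // *; lra. Qed.

Lemma sum_ge0 F : (forall j, 0 <= F j) -> 0 <= \big[Rplus/0]_(j : I) F j.
Proof. by move=> Fge0; elim/big_ind: _ => // *; lra. Qed.

Lemma le_sum F j : (forall k, 0 <= F k) -> F j <= \big[Rplus/0]_(k : I) F k.
Proof.
move=> Fge0; rewrite (bigD1 j) //= -{1}[F j]Rplus_0_r; apply: Rplus_le_compat_l.
by elim/big_ind: _ => // *; lra.
Qed.

Lemma sum_mulr c F : c * \big[Rplus/0]_(j : I) F j = \big[Rplus/0]_(j : I) (c * F j).
Proof. by elim/big_rec2: _ => [|j a b _ <-]; ring. Qed.

Lemma sum_mull c F : (\big[Rplus/0]_(j : I) F j) * c = \big[Rplus/0]_(j : I) (F j * c).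
Proof. by elim/big_rec2: _ => [|j a b _ <-]; ring. Qed.

Lemma sum_opp F : Ropp (\big[Rplus/0]_(j : I) F j) = \big[Rplus/0]_(j : I) (- F j).
Proof. by elim/big_rec2: _ => [|j a b _ <-]; ring. Qed.

Lemma Rabs_sum F : Rabs (\big[Rplus/0]_(j : I) F j) <= \big[Rplus/0]_(j : I) Rabs (F j).
Proof.
elim/big_ind2: _ => [|b a d c ? ?|i _]; [rewrite Rabs_R0 | have := Rabs_triang a c | ]; lra.
Qed.

End FiniteSums.

Lemma sum_const (K : nat) (c : R) : \big[Rplus/0]_(k < K) c = INR K * c.
Proof. elim: K => [|K IH]; first by rewrite big_ord0 /=; ring. by rewrite big_ord_recr IH S_INR /=; ring. Qed.

Lemma sum_telescope (K : nat) (a : nat -> R) :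
  \big[Rplus/0]_(k < K) (a k.+1 - a k) = a K - a 0%N.
Proof. elim: K => [|K IH]; first by rewrite big_ord0 /=; ring. by rewrite big_ord_recr IH /=; ring. Qed.

Lemma eventually_forall_fin (I : finType) (Q : I -> R -> Prop) :
  (forall i, exists T, forall t, T <= t -> Q i t) ->
  exists T, forall t, T <= t -> forall i, Q i t.
Proof.
move=> /fin_all_exists [T HT].
exists (\big[Rplus/0]_(i : I) Rabs (T i)) => t Ht i; apply: HT.
have := Rle_abs (T i); have := le_sum i (fun k => Rabs_pos (T k)); lra.
Qed.

Lemma eventually_nat_forall_fin (I : finType) (Q : I -> nat -> Prop) :
  (forall i, exists M, forall m, (M <= m)%N -> Q i m) ->
  exists M, forall m, (M <= m)%N -> forall i, Q i m.
Proof.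
move=> /fin_all_exists [M HM].
by exists (\max_i M i) => m Hm i; apply: HM; apply: leq_trans Hm; apply: leq_bigmax.
Qed.

Lemma small_forall_fin (I : finType) (Q : I -> R -> Prop) :
  (forall i, exists d, 0 < d /\ forall h, 0 < h < d -> Q i h) ->
  exists d, 0 < d /\ forall h, 0 < h < d -> forall i, Q i h.
Proof.
move=> /fin_all_exists [d Hd].
have d0 i : 0 < d i := proj1 (Hd i).
pose S := \big[Rplus/0]_(i : I) / d i.
have S0 : 0 <= S by apply: sum_ge0 => i; left; apply/Rinv_0_lt_compat.
exists (/ (S + 1)); split; first by apply: Rinv_0_lt_compat; lra.
move=> h [h0 hS] i; apply: (proj2 (Hd i)); split => //; apply: Rlt_le_trans hS _.
rewrite -(Rinv_inv (d i)); apply: Rinv_le_contravar; first exact/Rinv_0_lt_compat.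
have := le_sum i (fun k => Rlt_le _ _ (Rinv_0_lt_compat _ (d0 k))); rewrite -/S; lra.
Qed.

Lemma exp_decay_small (C lam eps : R) : 0 < lam -> 0 < eps ->
  exists T, forall t, T <= t -> C * exp (- lam * t) < eps.
Proof.
move=> lam0 eps0; case: (Rle_lt_dec C 0) => HC.
  by exists 0 => t _; have := exp_pos (- lam * t); nra.
exists ((Rabs (ln (eps / C)) + 1) / lam) => t Ht.
have Hlt : - lam * t < ln (eps / C).
  have : Rabs (ln (eps / C)) + 1 <= lam * t.
    apply: (Rmult_le_reg_r (/ lam)); first exact: Rinv_0_lt_compat.
    by rewrite (_ : lam * t * / lam = t) //; field; lra.
  have := Rle_abs (- ln (eps / C)); rewrite Rabs_Ropp; lra.
have Hexp : exp (- lam * t) < eps / C.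
  by rewrite -(exp_ln (eps / C)); [exact: exp_increasing | apply: Rdiv_lt_0_compat; lra].
have := Rmult_lt_compat_l C _ _ HC Hexp.
by rewrite (_ : C * (eps / C) = eps) //; field; lra.
Qed.

Lemma Rmult_div_succ_le (a b e : R) : 0 <= a -> 0 <= b -> 0 <= e ->
  a * (e / ((a + 1) * (b + 1)) * b) <= e.
Proof.
move=> a0 b0 e0; rewrite (_ : _ * _ = e * (a * b / ((a + 1) * (b + 1)))); last by field; lra.
suff : a * b / ((a + 1) * (b + 1)) <= 1 by nra.
apply: (Rmult_le_reg_r ((a + 1) * (b + 1))); first nra.
by rewrite /Rdiv Rmult_assoc Rinv_l; nra.
Qed.

(** * Linear maps and the symmetry subspace *)

Definition basis_vec (n : nat) (j : 'I_n) : vec n := fun i => if i == j then 1 else 0.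

Lemma sum_basis_vec n (z : vec n) i : \big[Rplus/0]_(j < n) (z j * basis_vec j i) = z i.
Proof.
rewrite (bigD1 i) //= big1 /basis_vec ?eqxx; first ring.
by move=> j /negbTE; rewrite eq_sym => ->; ring.
Qed.

Section LinearMaps.
Variables (n : nat) (g : vec n -> vec n).
Hypothesis g_lin : is_linear g.

Lemma linear_vec0 : g (fun _ => 0) = fun _ => 0.
Proof.
have := proj2 g_lin 0 (fun _ => 0); rewrite (_ : (fun _ => 0 * 0) = fun _ => 0).
  by move=> ->; apply: functional_extensionality => i; ring.
by apply: functional_extensionality => i; ring.
Qed.

Lemma linear_sum (r : seq 'I_n) (F : 'I_n -> vec n) :
  g (fun i => \big[Rplus/0]_(j <- r) F j i) = fun i => \big[Rplus/0]_(j <- r) g (F j) i.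
Proof.
elim: r => [|a r IH].
  rewrite (_ : (fun i => _) = fun _ => 0); last by apply: functional_extensionality => i; rewrite big_nil.
  by rewrite linear_vec0; apply: functional_extensionality => i; rewrite big_nil.
rewrite (_ : (fun i => _) = fun i => F a i + (fun i => \big[Rplus/0]_(j <- r) F j i) i); last first.
  by apply: functional_extensionality => i; rewrite big_cons.
by rewrite (proj1 g_lin) IH; apply: functional_extensionality => i; rewrite big_cons.
Qed.

Lemma linear_expand z i : g z i = \big[Rplus/0]_(j < n) (z j * g (basis_vec j) i).
Proof.
have Ez : z = fun i => \big[Rplus/0]_(j < n) (fun i => z j * basis_vec j i) i.
  by apply: functional_extensionality => k; rewrite sum_basis_vec.
by rewrite {1}Ez linear_sum; apply: eq_bigr => j _; rewrite (proj2 g_lin).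
Qed.

Lemma linear_sub x y l : g (fun k => x k - y k) l = g x l - g y l.
Proof. by rewrite !linear_expand /Rminus sum_opp -big_split; apply: eq_bigr => j _ /=; ring. Qed.

Lemma linear_sup_bound : exists G, 0 <= G /\
  forall z b, (forall j, Rabs (z j) <= b) -> forall i, Rabs (g z i) <= G * b.
Proof.
pose S i := \big[Rplus/0]_(j < n) Rabs (g (basis_vec j) i).
have S0 i : 0 <= S i by apply: sum_ge0 => j; apply: Rabs_pos.
exists (\big[Rplus/0]_(i < n) S i); split; first exact: sum_ge0.
move=> z b Hb i.
have b0 : 0 <= b by have := Hb i; have := Rabs_pos (z i); lra.
apply: Rle_trans (_ : S i * b <= _); last first.
  by apply: Rmult_le_compat_r => //; apply: le_sum.
rewrite linear_expand /S sum_mull; apply: Rle_trans (Rabs_sum _) _.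
apply: sum_le => j; rewrite Rabs_mult Rmult_comm.
by apply: Rmult_le_compat_l; [apply: Rabs_pos | apply: Hb].
Qed.

End LinearMaps.

Lemma kernel_approximation (n m : nat) (L : 'I_n -> 'I_m -> R) :
  exists K, 0 <= K /\ forall (z : vec n) b,
    (forall k, Rabs (\big[Rplus/0]_(j < n) (z j * L j k)) <= b) ->
    exists y : vec n, (forall k, \big[Rplus/0]_(j < n) (y j * L j k) = 0) /\
      forall j, Rabs (z j - y j) <= K * b.
Proof.
pose Lm : 'M[R]_(n, m) := (\matrix_(j, k) L j k)%R.
pose P := pinvmx Lm.
exists (\big[Rplus/0]_(k < m) \big[Rplus/0]_(j < n) Rabs (P k j)); split.
  by apply: sum_ge0 => k; apply: sum_ge0 => j; apply: Rabs_pos.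
move=> z b Hb; pose zr : 'rV[R]_n := (\row_j z j)%R.
(* The kernel point is [z - (z L) L^+]: [L^+ = pinvmx L] inverts [L] on its row space. *)
have zLP : (zr *m Lm *m P *m Lm = zr *m Lm)%R by rewrite mulmxKpV ?submxMl.
exists (fun j => (zr - zr *m Lm *m P)%R ord0 j); split.
  move=> k; have := congr1 (fun M : 'M[R]_(1, m) => M ord0 k) (mulmxBl zr (zr *m Lm *m P) Lm).
  rewrite zLP GRing.subrr /= !mxE => H; apply: etrans H.
  by apply: eq_bigr => j _; rewrite !mxE.
move=> j; rewrite (_ : z j - _ = (zr *m Lm *m P)%R ord0 j); last first.
  by rewrite !mxE /GRing.add /GRing.opp /=; ring.
rewrite mxE; apply: Rle_trans (Rabs_sum _) _; rewrite sum_mull; apply: sum_le => k.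
rewrite Rabs_mult Rmult_comm; apply: Rmult_le_compat; try exact: Rabs_pos.
  exact: (le_sum j (fun i => Rabs_pos (P k i))).
by rewrite mxE; apply: Rle_trans (Hb k); right; congr Rabs; apply: eq_bigr => i _; rewrite !mxE.
Qed.

Definition defects_vanish (n s : nat) (gam : 'I_s -> vec n -> vec n) (x : R -> vec n) :=
  forall eps, 0 < eps -> exists T, forall t, T <= t ->
    forall i l, Rabs (gam i (x t) l - x t l) < eps.

Lemma converges_to_Mcap_of_defects_vanish (n s : nat) (gam : 'I_s -> vec n -> vec n)
    (x : R -> vec n) :
  (forall i, is_linear (gam i)) -> defects_vanish gam x -> converges_to x (Mcap gam).
Proof.
move=> gam_lin defects.
(* [Mcap gam] is the kernel of [z |-> (gam i z l - z l)] indexed by [(i, l) : 'I_s * 'I_n]. *)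
pose L (j : 'I_n) (k : 'I_#|{: 'I_s * 'I_n}|) :=
  gam (enum_val k).1 (basis_vec j) (enum_val k).2 - basis_vec j (enum_val k).2.
have zL z k : \big[Rplus/0]_(j < n) (z j * L j k) =
    gam (enum_val k).1 z (enum_val k).2 - z (enum_val k).2.
  rewrite linear_expand // -(sum_basis_vec z (enum_val k).2) /Rminus sum_opp -big_split.
  by apply: eq_bigr => j _; rewrite /L /=; ring.
have [K [K0 HK]] := kernel_approximation L.
move=> eps eps0.
have eps' : 0 < eps / (K + 1) by apply: Rdiv_lt_0_compat; lra.
have [T HT] := defects _ eps'.
exists T => t Ht.
have small_image k : Rabs (\big[Rplus/0]_(j < n) (x t j * L j k)) <= eps / (K + 1).
  by rewrite zL; left; exact: HT.
have [y [yL Hy]] := HK (x t) (eps / (K + 1)) small_image.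
exists y; split.
  move=> i; apply: functional_extensionality => l.
  by have := yL (enum_rank (i, l)); rewrite zL enum_rankK /=; lra.
move=> j; apply: Rle_lt_trans (Hy j) _.
rewrite (_ : K * (eps / (K + 1)) = eps - eps / (K + 1)); [lra | field; lra].
Qed.

Lemma defects_vanish_of_contracting_towards (n s : nat) (f : vec n -> R -> vec n)
    (gam : 'I_s -> vec n -> vec n) (x : R -> vec n) (t0 : R) :
  (forall i, is_linear (gam i)) -> (forall i, contracting_towards f (fix_space (gam i))) ->
  is_solution f x t0 -> defects_vanish gam x.
Proof.
move=> gam_lin contr x_sol eps eps0.
apply: (@eventually_forall_fin _ (fun i t => forall l, Rabs (gam i (x t) l - x t l) < eps)) => i.
have [C [lam [lam0 HC]]] := contr i x t0 x_sol.
have [G [G0 HG]] := linear_sup_bound (gam_lin i).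
have [T HT] : exists T, forall t, T <= t -> C * exp (- lam * t) < eps / (G + 1).
  by apply: exp_decay_small => //; apply: Rdiv_lt_0_compat; lra.
exists (Rmax T (t0 + 1)) => t Ht l.
have [y [y_fix Hy]] := HC t (Rlt_le_trans _ _ _ (Rlt_n_Sn _) (Rle_trans _ _ _ (Rmax_r _ _) Ht)).
rewrite (_ : _ - _ = gam i (fun k => x t k - y k) l - (x t l - y l)); last first.
  by rewrite linear_sub // y_fix; ring.
have := Rabs_triang (gam i (fun k => x t k - y k) l) (- (x t l - y l)); rewrite Rabs_Ropp.
have Hd := HT t (Rle_trans _ _ _ (Rmax_l _ _) Ht).
have : G * (C * exp (- lam * t)) <= G * (eps / (G + 1)) by apply: Rmult_le_compat_l; lra.
have := HG _ _ Hy l; have := Hy l.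
have : (G + 1) * (eps / (G + 1)) = eps by field; lra.
rewrite /Rminus; lra.
Qed.

(** * Norms on R^n *)

Section Norms.
Variables (n : nat) (N : vec n -> R).
Hypothesis N_norm : is_norm N.

Lemma norm_ext x y : (forall i, x i = y i) -> N x = N y.
Proof. by move=> xy; congr N; apply: functional_extensionality. Qed.

Lemma norm_ge0 x : 0 <= N x. Proof. exact: (proj1 N_norm). Qed.

Lemma norm_eq0 x : N x = 0 -> forall i, x i = 0. Proof. exact: (proj1 (proj2 N_norm)). Qed.

Lemma Rdist_norm0 x : Rdist (N x) 0 = N x.
Proof. by rewrite /Rdist Rminus_0_r Rabs_right //; apply/Rle_ge/norm_ge0. Qed.

Lemma normZ c x : N (fun i => c * x i) = Rabs c * N x.
Proof. exact: (proj1 (proj2 (proj2 N_norm))). Qed.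

Lemma normD x y : N (fun i => x i + y i) <= N x + N y.
Proof. exact: (proj2 (proj2 (proj2 N_norm))). Qed.

Lemma norm0 x : (forall i, x i = 0) -> N x = 0.
Proof.
move=> x0; rewrite (@norm_ext x (fun i => 0 * x i)); last by move=> i; rewrite x0; ring.
by rewrite normZ Rabs_R0 Rmult_0_l.
Qed.

Lemma norm_distC x y : N (fun i => x i - y i) = N (fun i => y i - x i).
Proof.
rewrite -[RHS]Rmult_1_l -Rabs_R1 -Rabs_Ropp -normZ.
by apply: norm_ext => i; ring.
Qed.

Lemma norm_dist_triangle x y z :
  N (fun i => x i - z i) <= N (fun i => x i - y i) + N (fun i => y i - z i).
Proof.
rewrite (@norm_ext _ (fun i => (fun i => x i - y i) i + (fun i => y i - z i) i)).
  exact: normD.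
by move=> i; ring.
Qed.

Lemma norm_dist_rev a b : Rabs (N a - N b) <= N (fun i => a i - b i).
Proof.
have dist0 z : N (fun i => z i - 0) = N z by apply: norm_ext => i; ring.
have := norm_dist_triangle a b (fun _ => 0); have := norm_dist_triangle b a (fun _ => 0).
by rewrite !dist0 (norm_distC b a) => *; apply: Rabs_le; lra.
Qed.

Lemma norm_sum (I : Type) (r : seq I) (F : I -> vec n) :
  N (fun i => \big[Rplus/0]_(j <- r) F j i) <= \big[Rplus/0]_(j <- r) N (F j).
Proof.
elim: r => [|a r IH].
  by rewrite big_nil norm0 => [|i]; [lra | rewrite big_nil].
rewrite big_cons (@norm_ext _ (fun i => F a i + (fun i => \big[Rplus/0]_(j <- r) F j i) i)).
  by apply: Rle_trans (normD _ _) _; lra.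
by move=> i; rewrite big_cons.
Qed.

Lemma norm_le_sup : exists U, 0 <= U /\
  forall x b, (forall j, Rabs (x j) <= b) -> N x <= U * b.
Proof.
exists (\big[Rplus/0]_(j < n) N (basis_vec j)); split.
  by apply: sum_ge0 => j; apply: norm_ge0.
move=> x b Hb.
rewrite (@norm_ext x (fun i => \big[Rplus/0]_(j < n) (fun i => x j * basis_vec j i) i)); last first.
  by move=> i; rewrite sum_basis_vec.
apply: Rle_trans (norm_sum _ _) _; rewrite sum_mull; apply: sum_le => j.
by rewrite normZ Rmult_comm; apply: Rmult_le_compat_l; [apply: norm_ge0 | apply: Hb].
Qed.

Lemma norm_cvg0_of_coords_cvg (xs : nat -> vec n) (x : vec n) :
  (forall j, Un_cv (fun m => xs m j) (x j)) ->
  Un_cv (fun m => N (fun i => xs m i - x i)) 0.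
Proof.
move=> xs_cvg eps eps0; have [U [U0 HU]] := norm_le_sup.
have eps' : 0 < eps / (U + 1) by apply: Rdiv_lt_0_compat; lra.
have [M HM] : exists M, forall m, (M <= m)%N -> forall j, Rabs (xs m j - x j) < eps / (U + 1).
  apply: (@eventually_nat_forall_fin _ (fun j m => Rabs (xs m j - x j) < eps / (U + 1))) => j.
  by have [M HM] := xs_cvg j _ eps'; exists M => m /leP; apply: HM.
exists M => m /leP /HM Hm; rewrite Rdist_norm0.
apply: Rle_lt_trans (HU _ _ (fun j => Rlt_le _ _ (Hm j))) _.
rewrite (_ : U * (eps / (U + 1)) = eps - eps / (U + 1)); [lra | field; lra].
Qed.

End Norms.

Lemma inv_succ_cv0 : Un_cv (fun m => / (INR m + 1)) 0.
Proof.
move=> eps eps0; have [M HM] := INR_unbounded (/ eps).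
exists M => m /le_INR Hm; rewrite /Rdist Rminus_0_r.
have m1 : 0 < INR m + 1 by have := pos_INR m; lra.
rewrite Rabs_right; last exact/Rle_ge/Rlt_le/Rinv_0_lt_compat.
rewrite -(Rinv_inv eps); apply: Rinv_lt_contravar; last lra.
by apply: Rmult_lt_0_compat => //; apply: Rinv_0_lt_compat.
Qed.

Section NormLowerBound.
Variables (n : nat) (N : vec n -> R).
Hypothesis N_norm : is_norm N.

Definition supported_below (k : nat) (x : vec n) := forall j : 'I_n, (k <= j)%N -> x j = 0.

Definition coords_dominated (P : vec n -> Prop) :=
  exists c, 0 < c /\ forall x, P x -> forall j, c * Rabs (x j) <= N x.

Lemma supported_below_closed k (e : vec n) (hs : nat -> vec n) :
  coords_dominated (supported_below k) -> (forall m, supported_below k (hs m)) ->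
  Un_cv (fun m => N (fun i => e i - hs m i)) 0 ->
  exists h, supported_below k h /\ N (fun i => e i - h i) = 0.
Proof.
move=> [c [c0 Hc]] hs_supp hs_cvg.
have hs_cauchy j : Cauchy_crit (fun m => hs m j).
  move=> eps eps0; have [M HM] := hs_cvg (c * eps / 2) ltac:(nra).
  exists M => m l /HM + /HM; rewrite !(Rdist_norm0 N_norm) /Rdist => Hm Hl.
  have hs_ml : supported_below k (fun i => hs m i - hs l i).
    by move=> i ki; rewrite (hs_supp m i ki) (hs_supp l i ki); ring.
  have := Hc _ hs_ml j; have := norm_dist_triangle N_norm (hs m) e (hs l).
  rewrite (norm_distC N_norm (hs m) e) /=; nra.
pose h j := proj1_sig (R_complete _ (hs_cauchy j)).
have hs_h j : Un_cv (fun m => hs m j) (h j) by rewrite /h; case: R_complete.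
have h_supp : supported_below k h.
  move=> j kj; apply: (UL_sequence (fun m => hs m j)) => // eps eps0.
  by exists 0%N => m _; rewrite (hs_supp m j kj) /Rdist Rminus_0_r Rabs_R0.
exists h; split => //; apply: Rle_antisym; last exact: norm_ge0.
apply: Rle_plus_epsilon => eps eps0; rewrite Rplus_0_l.
have [M1 HM1] := hs_cvg (eps / 2) ltac:(lra).
have [M2 HM2] := norm_cvg0_of_coords_cvg N_norm hs_h (eps := eps / 2) ltac:(lra).
have := HM1 _ (Nat.le_max_l M1 M2); have := HM2 _ (Nat.le_max_r M1 M2).
rewrite !(Rdist_norm0 N_norm).
by have := norm_dist_triangle N_norm e (hs (Nat.max M1 M2)) h; lra.
Qed.

(* Otherwise points of the span of the first [k] coordinates approach [e_k]; they converge
   coordinatewise, and the limit would be [e_k] itself. *)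
Lemma dist_to_supported_below_pos k (kn : (k < n)%N) :
  coords_dominated (supported_below k) ->
  exists d, 0 < d /\ forall h, supported_below k h ->
    d <= N (fun i => basis_vec (Ordinal kn) i - h i).
Proof.
move=> dom; set e := basis_vec (Ordinal kn); apply: NNPP => no_gap.
have close m : exists h, supported_below k h /\ N (fun i => e i - h i) < / (INR m + 1).
  apply: NNPP => far; apply: no_gap; exists (/ (INR m + 1)); split.
    by apply: Rinv_0_lt_compat; have := pos_INR m; lra.
  by move=> h h_supp; apply: Rnot_lt_le => Hlt; apply: far; exists h.
have [hs Hhs] := choice _ close.
have [h [h_supp /(norm_eq0 N_norm) /(_ (Ordinal kn))]] :
    exists h, supported_below k h /\ N (fun i => e i - h i) = 0.
  apply: (supported_below_closed dom (fun m => proj1 (Hhs m))) => eps /inv_succ_cv0 [M HM].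
  exists M => m /HM; rewrite (Rdist_norm0 N_norm) /Rdist Rminus_0_r Rabs_right.
    by have := proj2 (Hhs m); lra.
  by apply/Rle_ge/Rlt_le/Rinv_0_lt_compat; have := pos_INR m; lra.
by rewrite h_supp //= /e /basis_vec eqxx; lra.
Qed.

(* Write [x = a e_k + h] with [h] supported below [k]: the gap [d] bounds [|a|] by [N x / d],
   hence [N h] by a multiple of [N x]. *)
Lemma coords_dominated_succ k (kn : (k < n)%N) :
  coords_dominated (supported_below k) -> coords_dominated (supported_below k.+1).
Proof.
move=> dom; have [c [c0 Hc]] := dom.
have [d [d0 Hd]] := dist_to_supported_below_pos kn dom.
set jk := Ordinal kn in Hd; set e := basis_vec jk in Hd.
have Ne0 := norm_ge0 N_norm e.
pose q := 1 + N e / d.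
have q1 : 1 <= q.
  have : 0 <= N e / d by apply: Rmult_le_pos; [| left; apply: Rinv_0_lt_compat].
  by rewrite /q; lra.
exists (Rmin d (c / q)); split; first by apply: Rmin_pos => //; apply: Rdiv_lt_0_compat; lra.
move=> x x_supp; pose a := x jk; pose h i := x i - a * e i.
have h_supp : supported_below k h.
  move=> j kj; rewrite /h /e /basis_vec; case: eqP => [->|jk']; first by rewrite /a; ring.
  rewrite x_supp; first ring.
  rewrite ltn_neqAle kj andbT; apply/eqP => kj'; apply: jk'; exact: val_inj.
have Ha : d * Rabs a <= N x.
  case: (Req_dec a 0) => [->|a0]; first by rewrite Rabs_R0 Rmult_0_r; apply: norm_ge0.
  rewrite (norm_ext N (y := fun i => a * (fun i => e i - (fun i => - h i / a) i) i)); last first.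
    by move=> i; rewrite /h /=; field.
  rewrite (normZ N_norm) Rmult_comm; apply: Rmult_le_compat_l; first exact: Rabs_pos.
  by apply: Hd => j kj; rewrite h_supp //; field.
have Nh : N h <= q * N x.
  rewrite (norm_ext N (y := fun i => x i + (fun i => - a * e i) i)); last by move=> i; rewrite /h; ring.
  apply: Rle_trans (normD N_norm _ _) _; rewrite (normZ N_norm) Rabs_Ropp.
  have : Rabs a * N e <= N x / d * N e.
    apply: Rmult_le_compat_r => //; apply: (Rmult_le_reg_l d) => //.
    by rewrite (_ : d * (N x / d) = N x) //; field; lra.
  by rewrite /q (_ : (1 + N e / d) * N x = N x + N x / d * N e); [lra | field; lra].
move=> j; case: (eqVneq j jk) => [->|jk'].
  by apply: Rle_trans Ha; apply: Rmult_le_compat_r; [apply: Rabs_pos | apply: Rmin_l].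
have -> : x j = h j by rewrite /h /e /basis_vec (negbTE jk'); ring.
apply: Rle_trans (_ : c / q * Rabs (h j) <= N x).
  by apply: Rmult_le_compat_r; [apply: Rabs_pos | apply: Rmin_r].
apply: (Rmult_le_reg_l q); first lra.
rewrite (_ : q * (c / q * Rabs (h j)) = c * Rabs (h j)); last by field; lra.
by have := Hc h h_supp j; lra.
Qed.

Lemma norm_coord_lower_bound : exists c, 0 < c /\ forall x j, c * Rabs (x j) <= N x.
Proof.
suff [c [c0 Hc]] : coords_dominated (supported_below n).
  by exists c; split => // x; apply: Hc => j; rewrite leqNgt ltn_ord.
have : (n <= n)%N by []; elim: {-2}n => [_|k IH kn].
  exists 1; split => [|x x0 j]; first lra.
  by rewrite x0 // Rabs_R0 Rmult_0_r; apply: norm_ge0.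
exact: (coords_dominated_succ kn (IH (ltnW kn))).
Qed.

End NormLowerBound.

(** * Matrix measures *)

Lemma mxv_linear n (A : mat n) : is_linear (mxv A).
Proof.
split=> [x y | c x]; apply: functional_extensionality => i; rewrite /mxv.
  by rewrite -big_split; apply: eq_bigr => j _ /=; ring.
by rewrite sum_mulr; apply: eq_bigr => j _; ring.
Qed.

Lemma mxv_id_plus n h (A : mat n) (w : vec n) i :
  mxv (id_plus h A) w i = w i + h * \big[Rplus/0]_(j < n) (A i j * w j).
Proof.
rewrite /mxv /id_plus -(sum_basis_vec w i) sum_mulr -big_split.
by apply: eq_bigr => j _ /=; rewrite /basis_vec eq_sym; ring.
Qed.

Section MatrixMeasure.
Variables (n : nat) (N : vec n -> R).
Hypothesis N_norm : is_norm N.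

(* On [R^0] the unit sphere is empty and no least upper bound exists. *)
Lemma opnorm_exists (A : mat n) : (0 < n)%N -> exists c, is_opnorm N A c.
Proof.
move=> n_gt0; pose e := basis_vec (Ordinal n_gt0).
have [c0 [c00 Hc0]] := norm_coord_lower_bound N_norm.
have [U [U0 HU]] := norm_le_sup N_norm.
have [G [G0 HG]] := linear_sup_bound (mxv_linear A).
pose E r := exists x, N x = 1 /\ r = N (mxv A x).
have E_bounded : bound E.
  exists (U * (G * / c0)) => r [x [Nx1 ->]]; apply: HU; apply: HG => j.
  by apply: (Rmult_le_reg_l c0) => //; rewrite Rinv_r; [rewrite -Nx1; apply: Hc0 | lra].
have Ne0 : 0 < N e.
  case: (norm_ge0 N_norm e) => // /esym /(norm_eq0 N_norm) /(_ (Ordinal n_gt0)).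
  by rewrite /e /basis_vec eqxx; lra.
have E_inhabited : exists r, E r.
  exists (N (mxv A (fun i => / N e * e i))), (fun i => / N e * e i); split => //.
  by rewrite (normZ N_norm) Rabs_right; [field; lra | left; apply: Rinv_0_lt_compat].
by have [c Hc] := @completeness E E_bounded E_inhabited; exists c.
Qed.

Lemma opnorm_bound (A : mat n) c w : is_opnorm N A c -> N (mxv A w) <= c * N w.
Proof.
move=> [c_ub _]; case: (norm_ge0 N_norm w) => [Nw0 | /esym Nw0]; last first.
  rewrite Nw0 Rmult_0_r (norm0 N_norm); first exact: Rle_refl.
  by move=> i; rewrite /mxv big1 // => j _; rewrite (norm_eq0 N_norm Nw0); ring.
pose x i := / N w * w i.
have Nx1 : N x = 1.
  by rewrite (normZ N_norm) Rabs_right; [field; lra | left; apply: Rinv_0_lt_compat].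
have := c_ub _ (ex_intro _ x (conj Nx1 erefl)).
rewrite (proj2 (mxv_linear A)) (normZ N_norm) Rabs_right; last by left; apply: Rinv_0_lt_compat.
move=> H; apply: (Rmult_le_reg_l (/ N w)); first exact: Rinv_0_lt_compat.
by rewrite (_ : / N w * (c * N w) = c) //; field; lra.
Qed.

Lemma matrix_measure_growth (A : mat n) m : (0 < n)%N -> is_matrix_measure N A m ->
  forall eps, 0 < eps -> exists d, 0 < d /\ forall h, 0 < h < d -> forall w : vec n,
    N (fun i => w i + h * \big[Rplus/0]_(j < n) (A i j * w j)) <= (1 + h * (m + eps)) * N w.
Proof.
move=> n_gt0 Hm eps eps0; have [d [d0 Hd]] := Hm eps eps0.
exists d; split => // h Hh w; have [c Hc] := opnorm_exists (id_plus h A) n_gt0.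
have /Rabs_def2 [Hc1 _] := Hd h c Hh Hc.
have c_le : c <= 1 + h * (m + eps).
  have h0 : 0 < h by lra.
  suff : c - 1 < h * (m + eps) by lra.
  apply: (Rmult_lt_reg_r (/ h)); first exact: Rinv_0_lt_compat.
  by rewrite (_ : h * (m + eps) * / h = m + eps); [rewrite /Rdiv in Hc1; lra | field; lra].
rewrite (norm_ext N (y := mxv (id_plus h A) w)); last by move=> i; rewrite mxv_id_plus.
apply: Rle_trans (opnorm_bound w Hc) _.
by apply: Rmult_le_compat_r => //; apply: norm_ge0.
Qed.

End MatrixMeasure.

(** * Linearization along segments *)

Lemma unit_interval_local_to_global (Q : R -> R -> Prop) :
  (forall s d d', Q s d -> 0 < d' <= d -> Q s d') ->
  (forall b, 0 <= b <= 1 -> exists r, 0 < r /\ exists d, 0 < d /\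
      forall s, 0 <= s <= 1 -> Rabs (s - b) < r -> Q s d) ->
  exists d, 0 < d /\ forall s, 0 <= s <= 1 -> Q s d.
Proof.
move=> Q_mono Q_loc.
pose E a := 0 <= a <= 1 /\ exists d, 0 < d /\ forall s, 0 <= s <= a -> Q s d.
have E0 : E 0.
  have [r [r0 [d [d0 Hd]]]] := Q_loc 0 ltac:(lra).
  split; first lra; exists d; split => // s Hs; apply: Hd; first lra.
  by rewrite (_ : s - 0 = 0) ?Rabs_R0; lra.
have E_bounded : bound E by exists 1 => a [Ha _]; lra.
have [b [b_ub b_lub]] := @completeness E E_bounded (ex_intro _ 0 E0).
have b01 : 0 <= b <= 1 by split; [apply: b_ub | apply: b_lub => a [Ha _]; lra].
have [r [r0 [db [db0 Hdb]]]] := Q_loc b b01.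
(* Some [a] in [E] lies within [r] of the supremum; then [E] extends past [b] up to [b + r/2]. *)
have [a [[a01 [da [da0 Hda]]] ba]] : exists a, E a /\ b - r < a.
  apply: NNPP => no_a; suff : b <= b - r by lra.
  by apply: b_lub => a Ea; apply: Rnot_lt_le => ?; apply: no_a; exists a.
set a' := Rmin 1 (b + r / 2).
have a'1 : a' <= 1 := Rmin_l _ _; have a'2 : a' <= b + r / 2 := Rmin_r _ _.
have Ea' : E a'.
  split; first by split; [apply: Rmin_glb |]; lra.
  exists (Rmin da db); split => [|s Hs]; first exact: Rmin_pos.
  case: (Rle_dec s a) => [sa | /Rnot_le_lt sa].
    by apply: Q_mono (Hda s ltac:(lra)) _; split; [apply: Rmin_pos | apply: Rmin_l].
  apply: Q_mono (Hdb s ltac:(lra) _) _; first by apply: Rabs_def1; lra.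
  by split; [apply: Rmin_pos | apply: Rmin_r].
have a'_eq1 : a' = 1 by have := b_ub _ Ea'; rewrite /a' /Rmin; case: Rle_dec; lra.
by case: Ea' => _ [d [d0 Hd]]; exists d; split => // s Hs; apply: Hd; lra.
Qed.

Lemma mean_value_linear_error (phi dphi : R -> R) (a u D eps : R) :
  (forall c, derivable_pt_lim phi c (dphi c)) ->
  (forall c, Rmin a (a + u) <= c <= Rmax a (a + u) -> Rabs (dphi c - D) <= eps) ->
  Rabs (phi (a + u) - phi a - D * u) <= eps * Rabs u.
Proof.
move=> phi_deriv dphi_close.
case: (Req_dec u 0) => [->|u0].
  by rewrite Rplus_0_r Rabs_R0 (_ : _ - _ - _ = 0) ?Rabs_R0; [lra | ring].
have lo_hi : Rmin a (a + u) < Rmax a (a + u) by rewrite /Rmin /Rmax; case: Rle_dec; lra.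
have [c [Hc c_in]] := MVT_cor2 phi dphi _ _ lo_hi (fun c _ => phi_deriv c).
have -> : Rabs (phi (a + u) - phi a - D * u) =
    Rabs (dphi c - D) * Rabs (Rmax a (a + u) - Rmin a (a + u)).
  rewrite -Rabs_mult Rmult_minus_distr_r -Hc.
  by move: Hc c_in; rewrite /Rmin /Rmax; case: Rle_dec => _ _ _;
    [| rewrite -Rabs_Ropp]; congr Rabs; ring.
rewrite (_ : Rabs (Rmax _ _ - Rmin _ _) = Rabs u); last first.
  by rewrite /Rmin /Rmax; case: Rle_dec => _; [| rewrite -Rabs_Ropp]; congr Rabs; ring.
by apply: Rmult_le_compat_r; [apply: Rabs_pos | apply: dphi_close; lra].
Qed.

Lemma upd_upd (I : eqType) (p : I -> R) i a b : upd (upd p i a) i b = upd p i b.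
Proof. by apply: functional_extensionality => j; rewrite /upd; case: eqP. Qed.

Lemma upd_at (I : eqType) (p : I -> R) i a : upd p i a i = a.
Proof. by rewrite /upd eqxx. Qed.

Lemma coordinate_increment_error n (G : vec n -> R) (dG : 'I_n -> vec n -> R) (w : vec n)
    j a u D eps :
  (forall z, derivable_pt_lim (fun h => G (upd z j h)) (z j) (dG j z)) ->
  (forall c, Rmin a (a + u) <= c <= Rmax a (a + u) -> Rabs (dG j (upd w j c) - D) <= eps) ->
  Rabs (G (upd w j (a + u)) - G (upd w j a) - D * u) <= eps * Rabs u.
Proof.
move=> G_deriv dG_close.
apply: (@mean_value_linear_error (fun h => G (upd w j h)) (fun c => dG j (upd w j c))) => // c.
rewrite -{1}(upd_at w j c).
have -> : (fun h => G (upd w j h)) = fun h => G (upd (upd w j c) j h).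
  by apply: functional_extensionality => h; rewrite upd_upd.
exact: G_deriv.
Qed.

Lemma big_ord_ltS n (F : 'I_n -> R) k (kn : (k < n)%N) :
  \big[Rplus/0]_(j < n | (j < k.+1)%N) F j =
  \big[Rplus/0]_(j < n | (j < k)%N) F j + F (Ordinal kn).
Proof.
rewrite (bigD1 (Ordinal kn)) ?ltnSn //= Rplus_comm; congr Rplus; apply: eq_bigl => j.
by rewrite ltnS leq_eqVlt -val_eqE /=; case: (@eqP _ (nat_of_ord j) k) => [->|]; rewrite ?ltnn ?andbT ?andbF.
Qed.

Lemma linearization_error n (G : vec n -> R) (dG : 'I_n -> vec n -> R) (p u : vec n) eps :
  (forall j z, derivable_pt_lim (fun h => G (upd z j h)) (z j) (dG j z)) ->
  (forall q, (forall j, Rabs (q j - p j) <= Rabs (u j)) ->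
     forall j, Rabs (dG j q - dG j p) <= eps) ->
  Rabs (G (fun j => p j + u j) - G p - \big[Rplus/0]_(j < n) (dG j p * u j))
    <= eps * \big[Rplus/0]_(j < n) Rabs (u j).
Proof.
move=> G_deriv dG_close.
(* Move from [p] to [p + u] one coordinate at a time, through [w 0 = p, ..., w n = p + u]. *)
pose w k j := p j + (if (j < k)%N then u j else 0).
suff partial k : (k <= n)%N ->
    Rabs (G (w k) - G p - \big[Rplus/0]_(j < n | (j < k)%N) (dG j p * u j))
      <= eps * \big[Rplus/0]_(j < n | (j < k)%N) Rabs (u j).
  have := partial n (leqnn n); rewrite (_ : w n = fun j => p j + u j); last first.
    by apply: functional_extensionality => j; rewrite /w ltn_ord.
  have all_lt (F : 'I_n -> R) :
      \big[Rplus/0]_(j < n | (j < n)%N) F j = \big[Rplus/0]_(j < n) F j.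
    by apply: eq_bigl => j; rewrite ltn_ord.
  by rewrite !all_lt.
elim: k => [_|k IH kn].
  rewrite (_ : w 0%N = p); last by apply: functional_extensionality => j; rewrite /w Rplus_0_r.
  by rewrite !big_pred0 // Rmult_0_r (_ : _ - _ - _ = 0) ?Rabs_R0; [lra | ring].
rewrite !(big_ord_ltS _ kn); set jk := Ordinal kn.
have w_upd h : upd (w k) jk h = fun j => if j == jk then h else w k j by [].
have wS : w k.+1 = upd (w k) jk (p jk + u jk).
  apply: functional_extensionality => j; rewrite w_upd /w ltnS leq_eqVlt -val_eqE /=.
  by case: (@eqP _ (nat_of_ord j) k) => // jk'; rewrite (_ : j = jk) //; exact: val_inj.
have wk : upd (w k) jk (p jk) = w k.
  by apply: functional_extensionality => j; rewrite w_upd; case: eqP => // ->; rewrite /w ltnn Rplus_0_r.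
have step : Rabs (G (upd (w k) jk (p jk + u jk)) - G (upd (w k) jk (p jk)) - dG jk p * u jk)
    <= eps * Rabs (u jk).
  apply: coordinate_increment_error => [z | c Hc]; first exact: G_deriv.
  apply: dG_close => j; rewrite w_upd; case: eqP => [->|_].
    by apply: Rabs_le; move: Hc; rewrite /Rmin /Rmax; case: Rle_dec;
      have := Rle_abs (u jk); have := Rle_abs (- u jk); rewrite Rabs_Ropp; lra.
  rewrite /w; case: (j < k)%N; first by rewrite (_ : _ - _ = u j); [lra | ring].
  by rewrite Rplus_0_r Rminus_diag Rabs_R0; apply: Rabs_pos.
rewrite wk in step; rewrite wS Rmult_plus_distr_l; have IHk := IH (ltnW kn).
set S := \big[Rplus/0]_(j < n | (j < k)%N) (dG j p * u j) in IHk *.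
rewrite (_ : _ - _ - _ = (G (upd (w k) jk (p jk + u jk)) - G (w k) - dG jk p * u jk)
  + (G (w k) - G p - S)); last ring.
by have := Rabs_triang (G (upd (w k) jk (p jk + u jk)) - G (w k) - dG jk p * u jk)
  (G (w k) - G p - S); lra.
Qed.

Section EulerStep.
Variables (n : nat) (F : vec n -> vec n) (J : 'I_n -> 'I_n -> vec n -> R).
Hypothesis F_partial : forall i j z,
  derivable_pt_lim (fun h => F (upd z j h) i) (z j) (J i j z).
Hypothesis J_cont : forall i j z eps, 0 < eps -> exists d, 0 < d /\
  forall z', (forall k, Rabs (z' k - z k) < d) -> Rabs (J i j z' - J i j z) < eps.

Definition segment_point (y v : vec n) (s : R) : vec n := fun k => y k + s * v k.

Lemma jacobian_uniformly_close (z : vec n) rho : 0 < rho -> exists r, 0 < r /\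
  forall z', (forall k, Rabs (z' k - z k) <= r) -> forall i j, Rabs (J i j z' - J i j z) < rho.
Proof.
move=> rho0.
have [d [d0 Hd]] : exists d, 0 < d /\ forall h, 0 < h < d -> forall ij : 'I_n * 'I_n,
    forall z', (forall k, Rabs (z' k - z k) < h) -> Rabs (J ij.1 ij.2 z' - J ij.1 ij.2 z) < rho.
  apply: small_forall_fin => ij; have [d [d0 Hd]] := J_cont ij.1 ij.2 z rho0.
  by exists d; split => // h [_ hd] z' Hz; apply: Hd => k; have := Hz k; lra.
exists (d / 2); split => [|z' Hz i j]; first lra.
by apply: (Hd (3 * d / 4) ltac:(lra) (i, j)) => k; have := Hz k; lra.
Qed.

Lemma uniform_linearization_on_segment (y v : vec n) rho : 0 < rho ->
  exists d, 0 < d /\ forall s, 0 <= s <= 1 -> forall u : vec n, (forall k, Rabs (u k) < d) ->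
    forall i, Rabs (F (fun k => segment_point y v s k + u k) i - F (segment_point y v s) i
                    - \big[Rplus/0]_(j < n) (J i j (segment_point y v s) * u j))
              <= rho * \big[Rplus/0]_(j < n) Rabs (u j).
Proof.
move=> rho0; pose Vs := \big[Rplus/0]_(k < n) Rabs (v k).
have Vs0 : 0 <= Vs by apply: sum_ge0 => k; apply: Rabs_pos.
have Hv k : Rabs (v k) <= Vs by apply: le_sum => l; apply: Rabs_pos.
apply: unit_interval_local_to_global => [s d d' Hd [d'0 d'd] u Hu | b _].
  by apply: Hd => k; have := Hu k; lra.
have [r [r0 Hr]] := jacobian_uniformly_close (segment_point y v b) (rho := rho / 2) ltac:(lra).
exists (r / (4 * (Vs + 1))); split; first by apply: Rdiv_lt_0_compat; lra.
exists (r / 4); split => [|s _ Hsb u Hu i]; first lra.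
have near_b k : Rabs (segment_point y v s k - segment_point y v b k) <= r / 4.
  rewrite /segment_point (_ : _ - _ = (s - b) * v k); last ring.
  rewrite Rabs_mult (_ : r / 4 = r / (4 * (Vs + 1)) * (Vs + 1)); last by field; lra.
  by apply: Rmult_le_compat; try apply: Rabs_pos; [lra | have := Hv k; lra].
apply: (linearization_error (G := fun z => F z i) (dG := fun j => J i j)) => // q Hq j.
have Jq : Rabs (J i j q - J i j (segment_point y v b)) < rho / 2.
  apply: Hr => k; have := Hq k; have := near_b k; have := Hu k.
  have := Rabs_triang (q k - segment_point y v s k)
    (segment_point y v s k - segment_point y v b k).
  by rewrite (_ : _ + _ = q k - segment_point y v b k); [lra | ring].
have Js : Rabs (J i j (segment_point y v s) - J i j (segment_point y v b)) < rho / 2.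
  by apply: Hr => k; have := near_b k; lra.
have := Rabs_triang (J i j q - J i j (segment_point y v b))
  (- (J i j (segment_point y v s) - J i j (segment_point y v b))).
by rewrite Rabs_Ropp (_ : _ + - _ = J i j q - J i j (segment_point y v s)); [lra | ring].
Qed.

Lemma segment_subdivision (y v : vec n) rho : 0 < rho ->
  exists K : nat, (0 < K)%N /\ forall (k : 'I_K) i,
    Rabs (F (segment_point y v (INR k.+1 / INR K)) i - F (segment_point y v (INR k / INR K)) i
          - \big[Rplus/0]_(j < n) (J i j (segment_point y v (INR k / INR K)) * (v j / INR K)))
    <= rho * \big[Rplus/0]_(j < n) Rabs (v j / INR K).
Proof.
move=> rho0; have [d [d0 Hd]] := uniform_linearization_on_segment y v rho0.
pose Vs := \big[Rplus/0]_(k < n) Rabs (v k).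
have [M HM] := INR_unbounded (Vs / d).
exists M.+1; split => // k i; set K := M.+1.
have K0 : 0 < INR K by rewrite /K S_INR; have := pos_INR M; lra.
have k_le : 0 <= INR k / INR K <= 1.
  split; first by apply: Rmult_le_pos; [apply: pos_INR | left; apply: Rinv_0_lt_compat].
  apply: (Rmult_le_reg_r (INR K)) => //; rewrite Rmult_1_l /Rdiv Rmult_assoc Rinv_l ?Rmult_1_r; last lra.
  by apply/le_INR/leP/ltnW.
have small_step j : Rabs (v j / INR K) < d.
  rewrite /Rdiv Rabs_mult Rabs_inv (Rabs_right (INR K)); last lra.
  apply: (Rmult_lt_reg_r (INR K)) => //; rewrite Rmult_assoc Rinv_l ?Rmult_1_r; last lra.
  apply: Rle_lt_trans (_ : Vs < _); first by apply: le_sum => l; apply: Rabs_pos.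
  apply: (Rmult_lt_reg_r (/ d)); first exact: Rinv_0_lt_compat.
  by rewrite (Rmult_comm d) Rmult_assoc Rinv_r ?Rmult_1_r /K ?S_INR; lra.
have := Hd _ k_le _ small_step i.
rewrite (_ : (fun k0 => _ + _) = segment_point y v (INR k.+1 / INR K)) //.
by apply: functional_extensionality => j; rewrite /segment_point S_INR; field; lra.
Qed.

Lemma segment_telescope (y v : vec n) h i (K : nat) : (0 < K)%N ->
  v i + h * (F (fun j => y j + v j) i - F y i) =
  \big[Rplus/0]_(k < K) (v i / INR K + h * (F (segment_point y v (INR k.+1 / INR K)) i
                                           - F (segment_point y v (INR k / INR K)) i)).
Proof.
move=> /ltP/lt_0_INR K0; rewrite big_split /= sum_const -sum_mulr.
rewrite (sum_telescope K (fun k => F (segment_point y v (INR k / INR K)) i)).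
have -> : segment_point y v (INR 0 / INR K) = y.
  by apply: functional_extensionality => j; rewrite /segment_point INR_0 /Rdiv !Rmult_0_l; ring.
have -> : segment_point y v (INR K / INR K) = fun j => y j + v j.
  by apply: functional_extensionality => j; rewrite /segment_point; field; lra.
by field; lra.
Qed.

Variables (N : vec n -> R) (lam : R).
Hypothesis N_norm : is_norm N.
Hypothesis J_measure : forall z eps, 0 < eps -> exists d, 0 < d /\ forall h, 0 < h < d ->
  forall w : vec n,
    N (fun i => w i + h * \big[Rplus/0]_(j < n) (J i j z * w j)) <= (1 + h * (- lam + eps)) * N w.

Lemma euler_step_contraction (x y : vec n) eps : 0 < eps -> exists d, 0 < d /\
  forall h, 0 < h < d ->
    N (fun i => (x i - y i) + h * (F x i - F y i))
      <= (1 + h * (- lam + eps)) * N (fun i => x i - y i) + h * eps.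
Proof.
move=> eps0; pose v i := x i - y i.
pose Vs := \big[Rplus/0]_(k < n) Rabs (v k).
have Vs0 : 0 <= Vs by apply: sum_ge0 => k; apply: Rabs_pos.
have [U [U0 HU]] := norm_le_sup N_norm.
(* On a fine subdivision of the segment from [y] to [x], each increment of [F] is a Jacobian
   step up to [rho], and each Jacobian step is controlled by the matrix measure. *)
pose rho := eps / ((U + 1) * (Vs + 1)).
have rho0 : 0 < rho by apply: Rdiv_lt_0_compat; nra.
have [K [K_gt0 HK]] := segment_subdivision y v rho0.
have K0 : 0 < INR K by apply/lt_0_INR/ltP.
pose z (k : nat) := segment_point y v (INR k / INR K); pose u i := v i / INR K.
have [d [d0 Hd]] := @small_forall_fin _ (fun (k : 'I_K) h => forall w : vec n,
  N (fun i => w i + h * \big[Rplus/0]_(j < n) (J i j (z k) * w j))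
    <= (1 + h * (- lam + eps)) * N w) (fun k => J_measure (z k) eps0).
exists d; split => // h Hh.
pose T (k : 'I_K) i := u i + h * (F (z k.+1) i - F (z k) i).
have -> : N (fun i => v i + h * (F x i - F y i)) = N (fun i => \big[Rplus/0]_(k < K) T k i).
  have -> : x = fun j => y j + v j by apply: functional_extensionality => j; rewrite /v; ring.
  by apply: norm_ext => i; rewrite (segment_telescope y v h i K_gt0).
have HT k : N (T k) <= (1 + h * (- lam + eps)) * N u + h * (U * (rho * (Vs / INR K))).
  pose r i := F (z k.+1) i - F (z k) i - \big[Rplus/0]_(j < n) (J i j (z k) * u j).
  rewrite (norm_ext N (y := fun i => (fun i => u i + h * \big[Rplus/0]_(j < n) (J i j (z k) * u j)) i
                                  + (fun i => h * r i) i)); last by move=> i; rewrite /T /r; ring.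
  apply: Rle_trans (normD N_norm _ _) _; apply: Rplus_le_compat; first exact: Hd.
  rewrite (normZ N_norm) Rabs_right; last lra.
  apply: Rmult_le_compat_l; first lra.
  apply: HU => i; apply: Rle_trans (HK k i) _; right; congr (rho * _).
  by rewrite /Vs /Rdiv sum_mull; apply: eq_bigr => j _; rewrite Rabs_mult Rabs_inv (Rabs_right (INR K)) //; lra.
apply: Rle_trans (norm_sum N_norm _ _) _; apply: Rle_trans (sum_le HT) _; rewrite sum_const.
have -> : N u = N v / INR K.
  rewrite (norm_ext N (y := fun i => / INR K * v i)); last by move=> i; rewrite /u /Rdiv Rmult_comm.
  rewrite (normZ N_norm) Rabs_right /Rdiv 1?Rmult_comm //.
  by left; apply: Rinv_0_lt_compat.
have rho_bound : U * (rho * Vs) <= eps by apply: Rmult_div_succ_le; lra.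
rewrite (_ : INR K * _ = (1 + h * (- lam + eps)) * N v + h * (U * (rho * Vs))); last by field; lra.
have : h * (U * (rho * Vs)) <= h * eps by apply: Rmult_le_compat_l; lra.
rewrite /v; lra.
Qed.

End EulerStep.

(** * Dini inequalities *)

Lemma continuity_ptP f t : continuity_pt f t <->
  forall eps, 0 < eps -> exists d, 0 < d /\ forall s, Rabs (s - t) < d -> Rabs (f s - f t) < eps.
Proof.
split=> [cont | Hf] eps eps0; [have [d [d0 Hd]] := cont eps eps0 | have [d [d0 Hd]] := Hf eps eps0].
  exists d; split => // s; case: (Req_dec t s) => [<- _|ts st].
    by rewrite Rminus_diag Rabs_R0.
  exact: (Hd s (conj (conj I ts) st)).
by exists d; split => // s [_ st]; apply: Hd.
Qed.

Lemma right_locally_nonincreasing (g : R -> R) a T : a <= T ->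
  (forall s, a <= s <= T -> continuity_pt g s) ->
  (forall s, a <= s < T -> exists d, 0 < d /\ forall h, 0 < h < d -> g (s + h) <= g s) ->
  g T <= g a.
Proof.
move=> aT g_cont g_loc.
pose E x := a <= x <= T /\ forall s, a <= s <= x -> g s <= g a.
have Ea : E a by split => [|s Hs]; [lra | rewrite (_ : s = a); lra].
have [b [b_ub b_lub]] := @completeness E (ex_intro _ T (fun x Ex => proj2 (proj1 Ex))) (ex_intro _ a Ea).
have ab : a <= b <= T by split; [apply: b_ub | apply: b_lub => x [Hx _]; lra].
have below_b s : a <= s < b -> g s <= g a.
  move=> Hs; apply: NNPP => gs; suff : b <= s by lra.
  by apply: b_lub => x [_ Hx]; apply: Rnot_lt_le => sx; apply: gs; apply: Hx; lra.
have gb : g b <= g a.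
  case: (Req_dec b a) => [->|ba]; first lra.
  apply: Rnot_lt_le => gab; have /continuity_ptP := g_cont b ab.
  move=> /(_ (g b - g a) ltac:(lra)) [d [d0 Hd]].
  have dm : 0 < Rmin d (b - a) by apply: Rmin_pos; lra.
  have := Rmin_l d (b - a); have := Rmin_r d (b - a); set s := b - Rmin d (b - a) / 2 => ? ?.
  have gs := below_b s ltac:(rewrite /s; lra).
  by have /Rabs_def2 [_] := Hd s ltac:(rewrite /s Rabs_left; lra); lra.
have Eb : E b.
  split => // s Hs; case: (Rle_lt_or_eq_dec s b (proj2 Hs)) => [sb | ->] //.
  by apply: below_b; lra.
case: (Rle_lt_or_eq_dec b T (proj2 ab)) => [bT | <-]; last by apply: (proj2 Eb); lra.
(* Otherwise [g] does not increase on a short interval to the right of [b], contradicting [b = sup E]. *)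
have [d [d0 Hd]] := g_loc b ltac:(lra).
have := Rmin_l d (T - b); have := Rmin_r d (T - b); set h0 := Rmin d (T - b) => ? ?.
have h00 : 0 < h0 by apply: Rmin_pos; lra.
suff : b + h0 / 2 <= b by lra.
apply: b_ub; split => [|s Hs]; first lra.
case: (Rle_lt_dec s b) => [sb | bs]; first by apply: (proj2 Eb); lra.
by rewrite (_ : s = b + (s - b)); [apply: Rle_trans (Hd _ _) gb; lra | ring].
Qed.

Lemma exp_mul_one_sub_le x : exp x * (1 - x) <= 1.
Proof.
case: (Rle_dec (1 - x) 0) => [x1 | /Rnot_le_lt x1]; first by have := exp_pos x; nra.
have := exp_ineq1_le (- x); have := exp_pos x.
have : exp x * exp (- x) = 1 by rewrite -exp_plus Rplus_opp_r exp_0.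
nra.
Qed.

Lemma exp_weighted_dini_step (D : R -> R) t1 lam eps s : 0 < lam -> 0 < eps -> 0 <= D s ->
  (forall e, 0 < e -> exists d, 0 < d /\ forall h, 0 < h < d ->
     D (s + h) <= (1 - lam * h) * D s + e * h) ->
  exists d, 0 < d /\ forall h, 0 < h < d ->
    exp (lam * (s + h - t1)) * D (s + h) - eps * (s + h - t1)
      <= exp (lam * (s - t1)) * D s - eps * (s - t1).
Proof.
move=> lam0 eps0 Ds D_dini; set w := exp (lam * (s - t1)).
have w0 : 0 < w := exp_pos _.
have c0 : 0 < eps / (w * exp lam).
  by apply: Rdiv_lt_0_compat => //; apply: Rmult_lt_0_compat => //; exact: exp_pos.
have [d [d0 Hd]] := D_dini _ c0.
exists (Rmin d 1); split => [|h Hh]; first by apply: Rmin_pos; lra.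
have := Rmin_l d 1; have := Rmin_r d 1; move=> ? ?.
have Dsh := Hd h ltac:(lra).
have w_split : exp (lam * (s + h - t1)) = w * exp (lam * h).
  by rewrite -exp_plus; congr exp; ring.
(* [exp (lam h) (1 - lam h) <= 1] absorbs the decay, and [exp (lam h) <= exp lam] the slack. *)
have decay : exp (lam * h) * (1 - lam * h) <= 1 := exp_mul_one_sub_le _.
have growth : exp (lam * h) <= exp lam.
  by case: (Req_dec h 1) => [->|h1]; [rewrite Rmult_1_r; lra | left; apply: exp_increasing; nra].
have eh := exp_pos (lam * h); have el := exp_pos lam.
rewrite w_split -/w; set c := eps / (w * exp lam) in Dsh.
have wc : w * exp (lam * h) * c <= eps.
  rewrite /c (_ : _ * _ = eps * (exp (lam * h) / exp lam)); last by field; lra.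
  suff : exp (lam * h) / exp lam <= 1 by nra.
  by apply: (Rmult_le_reg_r (exp lam)) => //; rewrite /Rdiv Rmult_assoc Rinv_l; lra.
have := Rmult_le_compat_l (w * exp (lam * h)) _ _ ltac:(nra) Dsh.
have : w * (exp (lam * h) * (1 - lam * h) * D s) <= w * D s by apply: Rmult_le_compat_l; nra.
have : w * exp (lam * h) * c * h <= eps * h by apply: Rmult_le_compat_r; lra.
have : w * exp (lam * h) * ((1 - lam * h) * D s + c * h) =
  w * (exp (lam * h) * (1 - lam * h) * D s) + w * exp (lam * h) * c * h by ring.
lra.
Qed.

Lemma dini_exp_decay (D : R -> R) t1 lam : 0 < lam ->
  (forall t, t1 <= t -> 0 <= D t) ->
  (forall t, t1 <= t -> continuity_pt D t) ->
  (forall t, t1 <= t -> forall e, 0 < e -> exists d, 0 < d /\ forall h, 0 < h < d ->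
       D (t + h) <= (1 - lam * h) * D t + e * h) ->
  forall T, t1 <= T -> D T <= exp (- lam * (T - t1)) * D t1.
Proof.
move=> lam0 D_ge0 D_cont D_dini T t1T.
suff /(Rmult_le_compat_l _ _ _ (Rlt_le _ _ (exp_pos (- lam * (T - t1))))) :
    exp (lam * (T - t1)) * D T <= D t1.
  by rewrite -Rmult_assoc -exp_plus (_ : _ + _ = 0) ?exp_0 ?Rmult_1_l //; ring.
apply: Rle_plus_epsilon => eps eps0.
pose eps' := eps / (T - t1 + 1).
have eps'0 : 0 < eps' by apply: Rdiv_lt_0_compat; lra.
pose g s := exp (lam * (s - t1)) * D s - eps' * (s - t1).
have g_cont s : t1 <= s <= T -> continuity_pt g s.
  move=> Hs; apply: (continuity_pt_minus (fun s => exp (lam * (s - t1)) * D s)).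
    apply: (continuity_pt_mult (fun s => exp (lam * (s - t1)))); last by apply: D_cont; lra.
    by apply: (continuity_pt_comp (fun s => lam * (s - t1))); [reg | apply: derivable_continuous_pt; reg].
  by reg.
have g_loc s : t1 <= s < T -> exists d, 0 < d /\ forall h, 0 < h < d -> g (s + h) <= g s.
  by move=> Hs; apply: exp_weighted_dini_step => //; [apply: D_ge0 | apply: D_dini]; lra.
have := right_locally_nonincreasing t1T g_cont g_loc.
rewrite /g Rminus_diag Rmult_0_r exp_0 Rmult_1_l Rmult_0_r Rminus_0_r.
have : eps' * (T - t1) <= eps.
  rewrite /eps' (_ : eps / (T - t1 + 1) * (T - t1) = eps - eps / (T - t1 + 1)); last by field; lra.
  by have : 0 < eps / (T - t1 + 1) by []; lra.
lra.
Qed.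

(** * Trajectories *)

Lemma derivable_pt_lim_increment (g : R -> R) t l : derivable_pt_lim g t l ->
  forall eps, 0 < eps -> exists d, 0 < d /\ forall h, Rabs h < d ->
    Rabs (g (t + h) - g t - h * l) <= eps * Rabs h.
Proof.
move=> g_deriv eps eps0; have [d Hd] := g_deriv eps eps0.
exists d; split => [|h hd]; first exact: cond_pos.
case: (Req_dec h 0) => [->|h0].
  by rewrite Rplus_0_r Rabs_R0 (_ : _ - _ - _ = 0) ?Rabs_R0; [lra | ring].
rewrite (_ : _ - _ - _ = ((g (t + h) - g t) / h - l) * h); last by field.
by rewrite Rabs_mult; apply: Rmult_le_compat_r; [apply: Rabs_pos | left; apply: Hd].
Qed.

Lemma derivable_pt_lim_sum (I : Type) (r : seq I) (F : I -> R -> R) (l : I -> R) t :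
  (forall j, derivable_pt_lim (F j) t (l j)) ->
  derivable_pt_lim (fun s => \big[Rplus/0]_(j <- r) F j s) t (\big[Rplus/0]_(j <- r) l j).
Proof.
move=> F_deriv; elim: r => [|a r IH].
  rewrite big_nil (_ : (fun s => _) = fct_cte 0); first exact: derivable_pt_lim_const.
  by apply: functional_extensionality => s; rewrite big_nil.
rewrite big_cons (_ : (fun s => _) = plus_fct (F a) (fun s => \big[Rplus/0]_(j <- r) F j s)).
  exact: derivable_pt_lim_plus.
by apply: functional_extensionality => s; rewrite big_cons.
Qed.

Lemma is_solution_linear_image n (f : vec n -> R -> vec n) (g : vec n -> vec n) x t0 :
  is_linear g -> equivariant f g -> is_solution f x t0 -> is_solution f (fun s => g (x s)) t0.
Proof.
move=> g_lin g_eqv [t0_ge0 x_deriv]; split => // t t0t i.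
have expand z : g z i = \big[Rplus/0]_(j <- index_enum 'I_n) (g (basis_vec j) i * z j).
  by rewrite linear_expand //; apply: eq_bigr => j _; ring.
rewrite g_eqv ?expand; last lra.
rewrite (_ : (fun s => _) = fun s => \big[Rplus/0]_(j <- index_enum 'I_n) (g (basis_vec j) i * x s j)).
  by apply: derivable_pt_lim_sum => j; apply: derivable_pt_lim_scal; apply: x_deriv.
by apply: functional_extensionality => s; exact: expand.
Qed.

Definition state_time (n : nat) (z : vec n) (t : R) : option 'I_n -> R :=
  fun o => if o is Some j then z j else t.

Lemma smooth_field_jacobian n (f : vec n -> R -> vec n) : smooth_field f ->
  exists J : R -> 'I_n -> 'I_n -> vec n -> R,
    (forall t i j z, derivable_pt_lim (fun h => f (upd z j h) t i) (z j) (J t i j z)) /\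
    (forall t i j z eps, 0 < eps -> exists d, 0 < d /\
       forall z', (forall k, Rabs (z' k - z k) < d) -> Rabs (J t i j z' - J t i j z) < eps).
Proof.
move=> f_smooth; have [dg Hdg] := fin_all_exists (fun i => proj2 (f_smooth i 1%N)).
exists (fun t i j z => dg i (Some j) (state_time z t)); split => [t i j z | t i j z eps eps0].
  exact: (proj1 (Hdg i) (Some j) (state_time z t)).
have [d [d0 Hd]] := proj2 (Hdg i) (Some j) (state_time z t) eps eps0.
exists d; split => // z' Hz; apply: Hd => -[k|] /=; first exact: Hz.
by rewrite Rminus_diag Rabs_R0.
Qed.

Lemma solution_increment n (f : vec n -> R -> vec n) x t0 t : is_solution f x t0 -> t0 < t ->
  forall eta, 0 < eta -> exists d, 0 < d /\ forall h, 0 < h < d ->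
    forall i, Rabs (x (t + h) i - x t i - h * f (x t) t i) <= eta * h.
Proof.
move=> [_ x_deriv] t0t eta eta0; apply: small_forall_fin => i.
have [d [d0 Hd]] := derivable_pt_lim_increment (x_deriv t t0t i) eta0.
exists d; split => // h [h0 hd].
have Hh : Rabs h = h by apply: Rabs_right; lra.
by rewrite -[in X in _ <= X]Hh; apply: Hd; rewrite Hh.
Qed.

Section Trajectories.
Variables (n : nat) (N : vec n -> R).
Hypothesis N_norm : is_norm N.

Lemma norm_dist_continuity (x y : R -> vec n) t :
  (forall i, continuity_pt (fun s => x s i) t) -> (forall i, continuity_pt (fun s => y s i) t) ->
  continuity_pt (fun s => N (fun i => x s i - y s i)) t.
Proof.
move=> x_cont y_cont; apply/continuity_ptP => eps eps0.
have [U [U0 HU]] := norm_le_sup N_norm.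
pose e := eps / (2 * (U + 1)).
have e0 : 0 < e by apply: Rdiv_lt_0_compat; lra.
have [d [d0 Hd]] : exists d, 0 < d /\ forall h, 0 < h < d -> forall i s, Rabs (s - t) < h ->
    Rabs (x s i - x t i) < e /\ Rabs (y s i - y t i) < e.
  apply: small_forall_fin => i.
  have [d1 [d10 H1]] := proj1 (continuity_ptP _ _) (x_cont i) e e0.
  have [d2 [d20 H2]] := proj1 (continuity_ptP _ _) (y_cont i) e e0.
  exists (Rmin d1 d2); split => [|h [_ hd] s hs]; first exact: Rmin_pos.
  have := Rmin_l d1 d2; have := Rmin_r d1 d2; move=> ? ?.
  by split; [apply: H1 | apply: H2]; lra.
exists (d / 2); split => [|s st]; first lra.
apply: Rle_lt_trans (norm_dist_rev N_norm _ _) _.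
have close i : Rabs ((x s i - y s i) - (x t i - y t i)) <= 2 * e.
  have [Hx Hy] := Hd (d / 2 + Rabs (s - t)) ltac:(have := Rabs_pos (s - t); lra) i s ltac:(lra).
  have := Rabs_triang (x s i - x t i) (- (y s i - y t i)); rewrite Rabs_Ropp.
  by rewrite (_ : _ + - _ = x s i - y s i - (x t i - y t i)); [lra | ring].
apply: Rle_lt_trans (HU _ _ close) _.
rewrite (_ : U * (2 * e) = eps * (U / (U + 1))); last by rewrite /e; field; lra.
suff : U / (U + 1) < 1 by nra.
by apply: (Rmult_lt_reg_r (U + 1)); [lra | rewrite /Rdiv Rmult_assoc Rinv_l; lra].
Qed.

Variables (f : vec n -> R -> vec n) (lam : R) (J : R -> 'I_n -> 'I_n -> vec n -> R).
Hypothesis J_partial : forall t i j z,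
  derivable_pt_lim (fun h => f (upd z j h) t i) (z j) (J t i j z).
Hypothesis J_cont : forall t i j z eps, 0 < eps -> exists d, 0 < d /\
  forall z', (forall k, Rabs (z' k - z k) < d) -> Rabs (J t i j z' - J t i j z) < eps.
Hypothesis J_measure : forall t, 0 <= t -> forall z eps, 0 < eps -> exists d, 0 < d /\
  forall h, 0 < h < d -> forall w : vec n,
    N (fun i => w i + h * \big[Rplus/0]_(j < n) (J t i j z * w j)) <= (1 + h * (- lam + eps)) * N w.

Lemma solution_dist_dini x y t0 t : is_solution f x t0 -> is_solution f y t0 -> t0 < t ->
  forall eps, 0 < eps -> exists d, 0 < d /\ forall h, 0 < h < d ->
    N (fun i => x (t + h) i - y (t + h) i) <= (1 - lam * h) * N (fun i => x t i - y t i) + eps * h.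
Proof.
move=> x_sol y_sol t0t eps eps0.
have t_ge0 : 0 <= t by case: x_sol => ? _; lra.
set D := N (fun i => x t i - y t i); have D0 : 0 <= D by apply: norm_ge0.
have [U [U0 HU]] := norm_le_sup N_norm.
pose e := eps / (2 * (D + 1)); have e0 : 0 < e by apply: Rdiv_lt_0_compat; lra.
pose eta := eps / (4 * (U + 1)); have eta0 : 0 < eta by apply: Rdiv_lt_0_compat; lra.
have [d1 [d10 Hd1]] := @euler_step_contraction _ (fun z => f z t) _ (J_partial t) (J_cont t)
  _ _ N_norm (J_measure t_ge0) (x t) (y t) _ e0.
have [dx [dx0 Hdx]] := solution_increment x_sol t0t eta0.
have [dy [dy0 Hdy]] := solution_increment y_sol t0t eta0.
have := Rmin_l d1 (Rmin dx dy); have := Rmin_r d1 (Rmin dx dy).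
have := Rmin_l dx dy; have := Rmin_r dx dy; move=> ? ? ? ?.
exists (Rmin d1 (Rmin dx dy)); split => [|h Hh]; first by apply: Rmin_pos => //; apply: Rmin_pos.
pose r i := (x (t + h) i - x t i - h * f (x t) t i) - (y (t + h) i - y t i - h * f (y t) t i).
rewrite (norm_ext N (y := fun i => (fun i => (x t i - y t i) + h * (f (x t) t i - f (y t) t i)) i
  + r i)); last by move=> i; rewrite /r; ring.
apply: Rle_trans (normD N_norm _ _) _; have := Hd1 h ltac:(lra); rewrite -/D.
have : N r <= U * (2 * eta * h).
  apply: HU => i; have := Hdx h ltac:(lra) i; have := Hdy h ltac:(lra) i.
  have := Rabs_triang (x (t + h) i - x t i - h * f (x t) t i)
    (- (y (t + h) i - y t i - h * f (y t) t i)); rewrite Rabs_Ropp /r.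
  by rewrite /Rminus; lra.
have : U * (2 * eta * h) <= eps / 2 * h.
  rewrite /eta (_ : U * _ = eps / 2 * h * (U / (U + 1))); last by field; lra.
  have : 0 <= eps / 2 * h by apply: Rmult_le_pos; lra.
  suff : U / (U + 1) <= 1 by nra.
  by apply: (Rmult_le_reg_r (U + 1)); [lra | rewrite /Rdiv Rmult_assoc Rinv_l; lra].
have : h * e * D + h * e = eps / 2 * h by rewrite /e; field; lra.
nra.
Qed.

End Trajectories.

Lemma solution_continuity n (f : vec n -> R -> vec n) x t0 t i :
  is_solution f x t0 -> t0 < t -> continuity_pt (fun s => x s i) t.
Proof. by move=> [_ x_deriv] t0t; apply: derivable_continuous_pt; exists (f (x t) t i); apply: x_deriv. Qed.

Lemma jacobian_measure_growth n (f : vec n -> R -> vec n) (N : vec n -> R) lam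
    (J : R -> 'I_n -> 'I_n -> vec n -> R) :
  (0 < n)%N -> is_norm N ->
  (forall x t A, 0 <= t -> is_jacobian f x t A ->
     exists m, is_matrix_measure N A m /\ m <= - lam) ->
  (forall t i j z, derivable_pt_lim (fun h => f (upd z j h) t i) (z j) (J t i j z)) ->
  forall t, 0 <= t -> forall z e, 0 < e -> exists d, 0 < d /\ forall h, 0 < h < d ->
    forall w : vec n, N (fun i => w i + h * \big[Rplus/0]_(j < n) (J t i j z * w j))
      <= (1 + h * (- lam + e)) * N w.
Proof.
move=> n_gt0 N_norm contr J_partial t t_ge0 z e e0.
have [m [Hm m_le]] := contr z t (fun i j => J t i j z) t_ge0 (fun i j => J_partial t i j z).
have [d [d0 Hd]] := matrix_measure_growth N_norm n_gt0 Hm e0.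
exists d; split => // h Hh w; apply: Rle_trans (Hd h Hh w) _.
by apply: Rmult_le_compat_r; [apply: norm_ge0 | nra].
Qed.

Lemma defects_vanish_of_contracting (n s : nat) (f : vec n -> R -> vec n)
    (gam : 'I_s -> vec n -> vec n) (x : R -> vec n) (t0 : R) :
  smooth_field f -> (forall i, is_linear (gam i)) -> (forall i, equivariant f (gam i)) ->
  contracting f -> is_solution f x t0 -> defects_vanish gam x.
Proof.
move=> f_smooth gam_lin gam_eqv [N [lam [N_norm [lam0 contr]]]] x_sol eps eps0.
case: (posnP n) => [n0 | n_gt0].
  by exists 0 => t _ i l; have := ltn_ord l; rewrite [X in (_ < X)%N]n0.
have [J [J_partial J_cont]] := smooth_field_jacobian f_smooth.
have J_measure := jacobian_measure_growth n_gt0 N_norm contr J_partial.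
have [c [c0 Hc]] := norm_coord_lower_bound N_norm.
apply: (@eventually_forall_fin _ (fun i t => forall l, Rabs (gam i (x t) l - x t l) < eps)) => i.
have y_sol := is_solution_linear_image (gam_lin i) (gam_eqv i) x_sol.
pose t1 := t0 + 1; pose D t := N (fun k => x t k - gam i (x t) k).
have decay : forall T, t1 <= T -> D T <= exp (- lam * (T - t1)) * D t1.
  apply: dini_exp_decay => // [t _ | t Ht | t Ht]; first exact: norm_ge0.
    have t0t : t0 < t by rewrite /t1 in Ht; lra.
    apply: norm_dist_continuity => // k.
      exact: (solution_continuity k x_sol t0t).
    exact: (solution_continuity k y_sol t0t).
  have t0t : t0 < t by rewrite /t1 in Ht; lra.
  exact: (solution_dist_dini N_norm J_partial J_cont J_measure x_sol y_sol t0t).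
have [T HT] := exp_decay_small (D t1 / c * exp (lam * t1)) lam0 eps0.
exists (Rmax T t1) => t Ht l.
have := Hc (fun k => x t k - gam i (x t) k) l; rewrite -/(D t) Rabs_minus_sym.
have := decay t (Rle_trans _ _ _ (Rmax_r _ _) Ht).
have := HT t (Rle_trans _ _ _ (Rmax_l _ _) Ht).
rewrite (_ : exp (- lam * (t - t1)) = exp (lam * t1) * exp (- lam * t)); last first.
  by rewrite -exp_plus; congr exp; ring.
rewrite (_ : D t1 / c * exp (lam * t1) * exp (- lam * t)
  = / c * (exp (lam * t1) * exp (- lam * t) * D t1)); last by field; lra.
move=> /(Rmult_lt_compat_l c _ _ c0) small D_le c_le; apply: (Rmult_lt_reg_l c) => //.
have : c * (/ c * (exp (lam * t1) * exp (- lam * t) * D t1))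
  = exp (lam * t1) * exp (- lam * t) * D t1 by field; lra.
lra.
Qed.

Theorem theorem8 (n s : nat) (f : vec n -> R -> vec n) (gam : 'I_s -> vec n -> vec n) :
  smooth_field f ->
  (forall i, is_linear (gam i)) ->
  (forall i, equivariant f (gam i)) ->
  (exists v : vec n, Mcap gam v /\ exists j, v j <> 0) ->
  ((forall i, contracting_towards f (fix_space (gam i))) \/ contracting f) ->
  forall (x : R -> vec n) (t0 : R), is_solution f x t0 -> converges_to x (Mcap gam).
Proof.
move=> f_smooth gam_lin gam_eqv _ [towards | contr] x t0 x_sol;
  apply: converges_to_Mcap_of_defects_vanish => //.
  exact: defects_vanish_of_contracting_towards towards x_sol.
exact: defects_vanish_of_contracting f_smooth gam_lin gam_eqv contr x_sol.
Qed.
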